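(* For every $\gamma_0\in[0,1]$ there exist a financial system $S$ in the base model (all contracts of the same priority) and banks $u\neq v$ with a debt contract from $u$ to $v$ of weight $c>0$ such that, denoting for $\gamma\in[0,1]$ by $S_\gamma$ the system obtained from $S$ by replacing the weight $c$ of this debt with $\gamma c$ (everything else unchanged): the system $S_{\gamma_0}$ has exactly one solution $r^*$, and for every $\gamma\in[0,1]\setminus\{\gamma_0\}$ and every solution $r$ of $S_\gamma$, the payoff of $v$ in $S_\gamma$ at $r$ is strictly smaller than the payoff of $v$ in $S_{\gamma_0}$ at $r^*$.
   Context: A financial system with payment priorities consists of: a finite set $V$ of banks; external assets $e_v\ge 0$ for each $v\in V$; a number $P\ge 1$ of priority levels; and a finite set of contracts, each of which is either a debt contract from a debtor $u$ to a creditor $v\neq u$ with weight $c>0$, or a credit default swap (CDS) from a debtor $u$ to a creditor $v\neq u$ in reference to a bank $w\notin\{u,v\}$ (the reference entity) with weight $c>0$. Every contract has a priority in $\{1,\dots,P\}$ (1 is the highest priority). It is assumed that every bank that is the reference entity of some CDS is the debtor of at least one debt contract of positive weight. Given a recovery rate vector $r\in[0,1]^V$: the liability of a contract $k$ is $l_k(r)=c$ if $k$ is a debt of weight $c$, and $l_k(r)=c\,(1-r_w)$ if $k$ is a CDS of weight $c$ in reference to $w$. For a bank $v$, $l_v(r)$ is the sum of the liabilities of the contracts with debtor $v$; $l_v^{(\rho)}(r)$ is the sum of the liabilities of contracts with debtor $v$ and priority $\rho$; and $l_v^{(\le\rho)}(r)=\sum_{i=1}^{\rho}l_v^{(i)}(r)$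 (with $l_v^{(\le 0)}=0$). The payment on a contract $k$ with debtor $v$ and priority $\rho$ is $p_k(r)=l_k(r)\cdot\min\{1,\max\{0,(r_v l_v(r)-l_v^{(\le\rho-1)}(r))/l_v^{(\rho)}(r)\}\}$ (and $p_k(r)=0$ if $l_v^{(\rho)}(r)=0$). The assets of $v$ are $a_v(r)=e_v+\sum_k p_k(r)$, summing over contracts $k$ with creditor $v$. A vector $r\in[0,1]^V$ is a solution (clearing vector) if for every $v\in V$: $r_v=1$ when $a_v(r)\ge l_v(r)$, and $r_v=a_v(r)/l_v(r)$ when $a_v(r)<l_v(r)$. The payoff of $v$ is $q_v(r)=\max\{a_v(r)-l_v(r),0\}$. When $P=1$, payments reduce to $p_k(r)=r_v\,l_k(r)$ (principle of proportionality); this is called the base model. A debt of weight $0$ is understood as no contract. *)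

From Stdlib Require Import Reals Lra List.
Import ListNotations.
Open Scope R_scope.

(* Banks are the naturals 0 .. nbanks-1. *)
Inductive ctype : Type :=
  | Debt : ctype
  | CDS : nat -> ctype.   (* CDS in reference to the given bank *)

Record contract : Type := mkContract {
  debtor : nat;
  creditor : nat;
  kind : ctype;
  weight : R;
  prio : nat }.

Record system : Type := mkSystem {
  nbanks : nat;
  ext : nat -> R;
  nprio : nat;
  contracts : list contract }.

Definition contract_wf (S : system) (k : contract) : Prop :=
  (debtor k < nbanks S)%nat /\ (creditor k < nbanks S)%nat /\
  debtor k <> creditor k /\ 0 < weight k /\
  (1 <= prio k <= nprio S)%nat /\
  match kind k with
  | Debt => True
  | CDS w => (w < nbanks S)%nat /\ w <> debtor k /\ w <> creditor k
  end.

Definition system_wf (S : system) : Prop :=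
  (1 <= nprio S)%nat /\
  (forall v, (v < nbanks S)%nat -> 0 <= ext S v) /\
  (forall k, In k (contracts S) -> contract_wf S k) /\
  (forall k w, In k (contracts S) -> kind k = CDS w ->
     exists k', In k' (contracts S) /\ kind k' = Debt /\ debtor k' = w /\ 0 < weight k').

Definition base_model (S : system) : Prop := nprio S = 1%nat.

Definition liab (r : nat -> R) (k : contract) : R :=
  match kind k with
  | Debt => weight k
  | CDS w => weight k * (1 - r w)
  end.

Definition sumc (cs : list contract) (f : contract -> R) : R :=
  fold_right (fun k acc => f k + acc) 0 cs.

Definition liab_bank (S : system) (r : nat -> R) (v : nat) : R :=
  sumc (contracts S) (fun k => if Nat.eqb (debtor k) v then liab r k else 0).

Definition liab_prio (S : system) (r : nat -> R) (v rho : nat) : R :=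
  sumc (contracts S)
    (fun k => if andb (Nat.eqb (debtor k) v) (Nat.eqb (prio k) rho) then liab r k else 0).

Fixpoint liab_le (Sy : system) (r : nat -> R) (v rho : nat) : R :=
  match rho with
  | O => 0
  | Datatypes.S i => liab_le Sy r v i + liab_prio Sy r v (Datatypes.S i)
  end.

Definition payment (S : system) (r : nat -> R) (k : contract) : R :=
  let v := debtor k in
  let rho := prio k in
  let d := liab_prio S r v rho in
  if Req_EM_T d 0 then 0
  else liab r k *
       Rmin 1 (Rmax 0 ((r v * liab_bank S r v - liab_le S r v (rho - 1)) / d)).

Definition assets (S : system) (r : nat -> R) (v : nat) : R :=
  ext S v + sumc (contracts S)
              (fun k => if Nat.eqb (creditor k) v then payment S r k else 0).

Definition is_solution (S : system) (r : nat -> R) : Prop :=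
  forall v, (v < nbanks S)%nat ->
    0 <= r v <= 1 /\
    (assets S r v >= liab_bank S r v -> r v = 1) /\
    (assets S r v < liab_bank S r v -> r v = assets S r v / liab_bank S r v).

Definition payoff (S : system) (r : nat -> R) (v : nat) : R :=
  Rmax (assets S r v - liab_bank S r v) 0.

(* replace the weight c of the i-th contract by g*c; a weight 0 (g = 0)
   means the contract is removed *)
Fixpoint scale_at (cs : list contract) (i : nat) (g : R) : list contract :=
  match cs, i with
  | [], _ => []
  | k :: cs', O =>
      if Req_EM_T g 0 then cs'
      else mkContract (debtor k) (creditor k) (kind k) (g * weight k) (prio k) :: cs'
  | k :: cs', Datatypes.S i' => k :: scale_at cs' i' g
  end.

Definition scale_system (S : system) (i : nat) (g : R) : system :=
  mkSystem (nbanks S) (ext S) (nprio S) (scale_at (contracts S) i g).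

From Stdlib Require Import Reals List Lra Lia.
Import ListNotations.
Open Scope R_scope.

(* Bank 1 (external assets 2, hence always solvent) lends to bank 0 (external
   assets g0) and has written a CDS on bank 0 to bank 2.  Scaling the loan to a
   weight g < g0 only shrinks bank 1's receivable to g; scaling it to g > g0
   leaves the receivable at g0 but makes bank 0 default with recovery rate g0/g,
   which triggers the CDS payment 1 - g0/g.  So the payoff 1 + (1 + g) r_0 of
   bank 1 peaks exactly at g = g0. *)

Definition clamp01 (x : R) : R := Rmin 1 (Rmax 0 x).

Lemma clamp01_id (x : R) : 0 <= x <= 1 -> clamp01 x = x.
Proof. intros. unfold clamp01, Rmin, Rmax. repeat destruct Rle_dec; lra. Qed.

Lemma clamp01_ge0 (x : R) : 0 <= clamp01 x.
Proof. unfold clamp01, Rmin, Rmax. repeat destruct Rle_dec; lra. Qed.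

Definition debt_0_1 : contract := mkContract 0 1 Debt 1 1.
Definition cds_1_2_on_0 : contract := mkContract 1 2 (CDS 0) 1 1.

Definition cds_example (g0 : R) : system :=
  mkSystem 3 (fun w => match w with 0%nat => g0 | 1%nat => 2 | _ => 0 end) 1
    [debt_0_1; cds_1_2_on_0].

Notation cds_example_at g0 g := (scale_system (cds_example g0) 0 g).

Lemma cds_example_wf (g0 : R) : 0 <= g0 -> system_wf (cds_example g0).
Proof.
  intros Hg0. unfold system_wf; simpl. split; [lia|]. split; [|split].
  - intros v Hv. destruct v as [|[|v]]; lra.
  - intros k [<-|[<-|[]]]; unfold contract_wf; simpl; repeat split; try lia; lra.
  - intros k w [<-|[<-|[]]]; simpl; intros E; inversion E; subst.
    exists debt_0_1; simpl; repeat split; auto; lra.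
Qed.

Section BalanceSheets.

Variables (g0 g : R) (r : nat -> R).

(* For g = 0 the loan is removed from the system; all formulas below still hold. *)
Lemma liab_bank_0 : liab_bank (cds_example_at g0 g) r 0 = g.
Proof.
  unfold liab_bank, scale_system; simpl.
  destruct (Req_EM_T g 0); simpl; unfold liab; simpl; lra.
Qed.

Lemma assets_0 : assets (cds_example_at g0 g) r 0 = g0.
Proof. unfold assets, scale_system; simpl. destruct (Req_EM_T g 0); simpl; lra. Qed.

Lemma liab_bank_1 : liab_bank (cds_example_at g0 g) r 1 = 1 - r 0%nat.
Proof.
  unfold liab_bank, scale_system; simpl.
  destruct (Req_EM_T g 0); simpl; unfold liab; simpl; lra.
Qed.

Lemma assets_1 : assets (cds_example_at g0 g) r 1 = 2 + g * clamp01 (r 0%nat).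
Proof.
  unfold assets, scale_system; simpl. destruct (Req_EM_T g 0) as [->|Hg]; simpl.
  - lra.
  - unfold payment, liab_prio, liab_bank, liab; simpl.
    destruct Req_EM_T; [lra|].
    replace ((r 0%nat * (g * 1 + (0 + 0)) - 0) / (g * 1 + (0 + 0))) with (r 0%nat)
      by (field; lra).
    unfold clamp01. lra.
Qed.

Lemma liab_bank_2 : liab_bank (cds_example_at g0 g) r 2 = 0.
Proof. unfold liab_bank, scale_system; simpl. destruct (Req_EM_T g 0); simpl; lra. Qed.

Lemma assets_2_ge0 : r 0%nat <= 1 -> 0 <= assets (cds_example_at g0 g) r 2.
Proof.
  intros Hr0. unfold assets, scale_system; simpl.
  destruct (Req_EM_T g 0); simpl; unfold payment; simpl; destruct Req_dec_T; try lra;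
  unfold liab; simpl;
  match goal with |- context [Rmin 1 (Rmax 0 ?x)] => pose proof (clamp01_ge0 x) end;
  unfold clamp01 in *; nra.
Qed.

End BalanceSheets.

Section Solutions.

Variables (g0 g : R) (r : nat -> R).
Hypothesis Hg : 0 <= g.
Hypothesis Hsol : is_solution (cds_example_at g0 g) r.

Lemma solution_r0_bounds : 0 <= r 0%nat <= 1.
Proof. apply (Hsol 0%nat); simpl; lia. Qed.

Lemma solution_r0_solvent : g <= g0 -> r 0%nat = 1.
Proof.
  intros Hle. destruct (Hsol 0%nat) as (_ & Hsolvent & _); [simpl; lia|].
  apply Hsolvent. rewrite assets_0, liab_bank_0. lra.
Qed.

Lemma solution_r0_default : g0 < g -> r 0%nat = g0 / g.
Proof.
  intros Hlt. destruct (Hsol 0%nat) as (_ & _ & Hdefault); [simpl; lia|].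
  rewrite assets_0, liab_bank_0 in Hdefault. apply Hdefault. lra.
Qed.

Lemma solution_r1 : r 1%nat = 1.
Proof.
  destruct (Hsol 1%nat) as (_ & Hsolvent & _); [simpl; lia|].
  apply Hsolvent. rewrite assets_1, liab_bank_1.
  pose proof solution_r0_bounds. pose proof (clamp01_ge0 (r 0%nat)).
  assert (0 <= g * clamp01 (r 0%nat)) by nra. lra.
Qed.

Lemma solution_r2 : r 2%nat = 1.
Proof.
  destruct (Hsol 2%nat) as (_ & Hsolvent & _); [simpl; lia|].
  apply Hsolvent. rewrite liab_bank_2.
  pose proof (assets_2_ge0 g0 g r (proj2 solution_r0_bounds)). lra.
Qed.

Lemma payoff_1 : payoff (cds_example_at g0 g) r 1 = 1 + (1 + g) * r 0%nat.
Proof.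
  unfold payoff. rewrite assets_1, liab_bank_1, clamp01_id by exact solution_r0_bounds.
  pose proof solution_r0_bounds. unfold Rmax; destruct Rle_dec; nra.
Qed.

End Solutions.

Lemma ones_solution (g0 : R) : 0 <= g0 -> is_solution (cds_example_at g0 g0) (fun _ => 1).
Proof.
  intros Hg0 w Hw. split; [lra|]. split; [auto|].
  destruct w as [|[|[|w]]]; simpl in Hw; try lia.
  - rewrite assets_0, liab_bank_0. lra.
  - rewrite assets_1, liab_bank_1, clamp01_id by lra. lra.
  - rewrite liab_bank_2. pose proof (assets_2_ge0 g0 g0 (fun _ => 1) ltac:(lra)). lra.
Qed.

Lemma solution_unique_at_g0 (g0 : R) (r : nat -> R) : 0 <= g0 ->
  is_solution (cds_example_at g0 g0) r -> forall w, (w < 3)%nat -> r w = 1.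
Proof.
  intros Hg0 Hsol w Hw.
  destruct w as [|[|[|w]]]; try lia.
  - exact (solution_r0_solvent g0 g0 r Hsol (Rle_refl g0)).
  - exact (solution_r1 g0 g0 r Hg0 Hsol).
  - exact (solution_r2 g0 g0 r Hsol).
Qed.

Lemma payoff_1_lt_at_g0 (g0 g : R) (r : nat -> R) : 0 <= g0 -> 0 <= g -> g <> g0 ->
  is_solution (cds_example_at g0 g) r ->
  payoff (cds_example_at g0 g) r 1 < payoff (cds_example_at g0 g0) (fun _ => 1) 1.
Proof.
  intros Hg0 Hg Hne Hsol.
  rewrite (payoff_1 g0 g r Hg Hsol), (payoff_1 g0 g0 _ Hg0 (ones_solution g0 Hg0)).
  destruct (Rle_lt_dec g g0) as [Hle|Hlt].
  - rewrite (solution_r0_solvent g0 g r Hsol Hle). lra.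
  - rewrite (solution_r0_default g0 g r Hsol Hlt).
    assert (Hreceived : g * (g0 / g) = g0) by (field; lra).
    nra.
Qed.

Theorem mainTheorem4 :
  forall g0 : R, 0 <= g0 <= 1 ->
  exists (S : system) (i u v : nat) (c : R),
    system_wf S /\ base_model S /\
    u <> v /\ 0 < c /\
    (exists rho, nth_error (contracts S) i = Some (mkContract u v Debt c rho)) /\
    exists rstar : nat -> R,
      is_solution (scale_system S i g0) rstar /\
      (forall r, is_solution (scale_system S i g0) r ->
         forall w, (w < nbanks S)%nat -> r w = rstar w) /\
      (forall g r, 0 <= g <= 1 -> g <> g0 ->
         is_solution (scale_system S i g) r ->
         payoff (scale_system S i g) r v < payoff (scale_system S i g0) rstar v).
Proof.
  intros g0 [Hg0 _].
  exists (cds_example g0), 0%nat, 0%nat, 1%nat, 1.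
  split; [exact (cds_example_wf g0 Hg0)|].
  split; [reflexivity|]. split; [lia|]. split; [lra|].
  split; [exists 1%nat; reflexivity|].
  exists (fun _ => 1). split; [|split].
  - exact (ones_solution g0 Hg0).
  - exact (fun r Hsol => solution_unique_at_g0 g0 r Hg0 Hsol).
  - intros g r [Hg _] Hne Hsol. exact (payoff_1_lt_at_g0 g0 g r Hg0 Hg Hne Hsol).
Qed.
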